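(* Let $p$ be an odd prime and let $N(p)$ be the number of residue classes $c\in\mathbb{Z}/(p)$ for which the polynomial $\Phi_{3,\tilde f}(x)$ attached to $\tilde f(x)=x^2+c$ over $\mathbb{Z}/(p)$ has a linear factor modulo $p$. Then $$N(p)\le \frac13\left(p+2\left(\frac{-3}{p}\right)\right),$$ where $\left(\frac{-3}{p}\right)$ is the Legendre symbol (equal to $0$ for $p=3$).
   Context: For $f(x)=x^2+c$, $\Phi_{3,f}(x)=\frac{f^3(x)-x}{f(x)-x}$, where $f^3$ is the threefold iterate; explicitly $\Phi_{3,f}(x)=x^6+x^5+(3c+1)x^4+(2c+1)x^3+(3c^2+3c+1)x^2+(c^2+2c+1)x+c^3+2c^2+c+1$, considered modulo $p$. *)

From HB Require Import structures.
From mathcomp Require Import all_boot all_order all_algebra.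
Set Implicit Arguments. Unset Strict Implicit. Unset Printing Implicit Defensive.
Import Order.TTheory GRing.Theory Num.Theory.
Local Open Scope ring_scope.

(* Phi_{3,f}(x) for f(x) = x^2 + c over a commutative ring R, using the
   explicit formula for (f^3(x) - x)/(f(x) - x). *)
Definition Phi3 (R : comNzRingType) (c : R) : {poly R} :=
  'X^6 + 'X^5 + (3 * c + 1) *: 'X^4 + (2 * c + 1) *: 'X^3
  + (3 * c ^+ 2 + 3 * c + 1) *: 'X^2 + (c ^+ 2 + 2 * c + 1) *: 'X
  + (c ^+ 3 + 2 * c ^+ 2 + c + 1)%:P.

Definition has_linear_factor (F : finFieldType) (q : {poly F}) : bool :=
  [exists a : F, exists b : F, (a != 0) && ((a *: 'X + b%:P) %| q)].

Definition Ncount (p : nat) : nat :=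
  #|[set c : 'F_p | has_linear_factor (Phi3 c)]|.

Definition legendre_m3 (p : nat) : int :=
  if (p %| 3)%N then 0
  else if [exists x : 'F_p, x ^+ 2 == - 3] then 1 else -1.

From HB Require Import structures.
From mathcomp Require Import all_boot all_order all_algebra.
From mathcomp Require Import ring lra zify.
Set Implicit Arguments. Unset Strict Implicit. Unset Printing Implicit Defensive.
Import Order.TTheory GRing.Theory Num.Theory.
Local Open Scope ring_scope.

(* Let f(x) = x^2 + c over a field F with 2 != 0 and let x be a root of
   Phi_{3,f}.  Either x is a fixed point of f, and then u = 2x is a root of
   u^2 + u + 1 while c = u/2 - u^2/4; or x lies on a genuine 3-cycle, and then
   its "trace" t = x + f(x) is admissible (t, t+1, t^2+t+1 all nonzero) and
   c = cparam t := - P(t) / (4 t^2 (t+1)^2) for an explicit sextic P.  The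
   Moebius map rot t = -(t+1)/t has order three, has no fixed point among
   admissible t, and preserves cparam; hence on a finite field every value of
   cparam on admissible t is taken at least three times.  Since there are
   #|F| - 2 - #|Fix| admissible t, where Fix is the set of roots of u^2+u+1,
   we get  3 N + 2 <= #|F| + 2 #|Fix|.  Finally #|Fix| = 1 + (-3/p) when
   F = Z/(p), which turns this count into the stated rational inequality. *)

Section PeriodThreeAlgebra.
Variable F : fieldType.
Hypothesis two_neq0 : (2 : F) != 0.

Lemma four_neq0 : (4 : F) != 0.
Proof. have -> : (4 : F) = 2 * 2 by ring. by rewrite mulf_neq0. Qed.

Lemma Phi3E (c x : F) : (Phi3 c).[x] =
  x^+6 + x^+5 + (3 * c + 1) * x^+4 + (2 * c + 1) * x^+3
  + (3 * c ^+ 2 + 3 * c + 1) * x^+2 + (c ^+ 2 + 2 * c + 1) * x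
  + (c ^+ 3 + 2 * c ^+ 2 + c + 1).
Proof. by rewrite /Phi3 !hornerE. Qed.

Definition trace (c x : F) : F := x + (x ^+ 2 + c).

(* The sextic P(t); on a 3-cycle with trace t, 4 t^2 (t+1)^2 c + P(t) = 0. *)
Definition trace_poly (t : F) : F :=
  t^+6 + 2*t^+5 + 4*t^+4 + 8*t^+3 + 9*t^+2 + 4*t + 1.

Definition cparam (t : F) : F := - trace_poly t / (4 * t^+2 * (t+1)^+2).

(* The order-three Moebius map permuting the traces along a 3-cycle. *)
Definition rot (t : F) : F := - (t + 1) / t.

(* Traces of genuine 3-cycles avoid the poles and fixed points of rot. *)
Definition admissible (t : F) : bool :=
  [&& t != 0, t + 1 != 0 & t^+2 + t + 1 != 0].

(* Elimination of x from Phi3 c x = 0 and t = trace c x. *)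
Lemma trace_relation (c x : F) : let t := trace c x in
  4 * t^+2 * (t+1)^+2 * c + trace_poly t = (Phi3 c).[x] *
   (1 + 3*c + 4*c^+2 + c^+3 + 3*x + 10*x*c + 5*x*c^+2 + 9*x^+2 + 15*x^+2*c
    + 3*x^+2*c^+2 + 13*x^+3 + 10*x^+3*c + 11*x^+4 + 3*x^+4*c + 5*x^+5 + x^+6).
Proof. by rewrite Phi3E /trace_poly /trace; ring. Qed.

Lemma trace_linear (c x : F) : let t := trace c x in
  2*t*(t+1)*x - (t^+3 + 2*t^+2 + t + 1) = - (Phi3 c).[x].
Proof. by rewrite Phi3E /trace; ring. Qed.

Lemma fixed_root_param (c x : F) : (Phi3 c).[x] = 0 -> x^+2 + c = x ->
  (2 * x)^+2 + 2 * x + 1 = 0 /\ c = (2 * x) / 2 - (2 * x)^+2 / 4.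
Proof.
move=> root_x fix_x; have Ec : c = x - x^+2 by rewrite -{1}fix_x; ring.
split; first by rewrite -root_x Phi3E Ec; ring.
by rewrite Ec; field; rewrite two_neq0 four_neq0.
Qed.

Lemma cycle_root_param (c x : F) : (Phi3 c).[x] = 0 -> x^+2 + c != x ->
  admissible (trace c x) /\ cparam (trace c x) = c.
Proof.
move=> root_x nfix_x; set t := trace c x.
have rel : 4 * t^+2 * (t+1)^+2 * c + trace_poly t = 0.
  by rewrite trace_relation root_x mul0r.
have lin : 2*t*(t+1)*x - (t^+3 + 2*t^+2 + t + 1) = 0.
  by rewrite trace_linear root_x oppr0.
have t0 : t != 0.
  apply: contra_eq_neq rel => ->.
  by rewrite (_ : _ + _ = 1) ?oner_neq0 // /trace_poly; ring.
have t1 : t + 1 != 0.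
  apply: contra_eq_neq rel => t1; have -> : t = -1 by apply/eqP; rewrite -subr_eq0 opprK t1.
  by rewrite (_ : _ + _ = 1) ?oner_neq0 // /trace_poly; ring.
have te : t^+2 + t + 1 != 0.
  apply: contra_neq nfix_x => te; apply/eqP; rewrite -subr_eq0; apply/eqP.
  have -> : x^+2 + c - x = (2*t*(t+1)*x - (t^+3 + 2*t^+2 + t + 1))
                           + (t^+2 + t + 1) * (t + 1 - 2*x) by rewrite /t /trace; ring.
  by rewrite lin te mul0r addr0.
split; first by rewrite /admissible t0 t1 te.
have den : 4 * t^+2 * (t+1)^+2 != 0 by rewrite !mulf_neq0 ?expf_neq0 ?four_neq0.
apply: (mulIf den); rewrite /cparam mulfVK //.
by apply/eqP; rewrite eqr_oppLR -addr_eq0 addrC mulrC rel.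
Qed.

Section Rotation.
Variable t : F.
Hypothesis adm_t : admissible t.

Lemma rot_admissible : admissible (rot t).
Proof.
case/and3P: adm_t => t0 t1 te; rewrite /admissible /rot.
have -> : - (t + 1) / t + 1 = - t^-1 by field.
have -> : (- (t + 1) / t)^+2 + - (t + 1) / t + 1 = (t^+2 + t + 1) / t^+2 by field.
by apply/and3P; split; rewrite ?mulf_neq0 ?oppr_eq0 ?invr_eq0 ?expf_neq0.
Qed.

Lemma rot_neq : rot t != t.
Proof.
case/and3P: adm_t => t0 _ te; rewrite -subr_eq0.
have -> : rot t - t = - (t^+2 + t + 1) / t by rewrite /rot; field.
by rewrite mulf_neq0 ?oppr_eq0 ?invr_eq0.
Qed.

Lemma rot2_neq : rot (rot t) != t.
Proof.
case/and3P: adm_t => t0 t1 te; rewrite -subr_eq0.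
have -> : rot (rot t) - t = - (t^+2 + t + 1) / (t + 1).
  by rewrite /rot; field; rewrite t0 t1 oppr_eq0 t1.
by rewrite mulf_neq0 ?oppr_eq0 ?invr_eq0.
Qed.

Lemma cparam_rot : cparam (rot t) = cparam t.
Proof.
case/and3P: adm_t => t0 t1 _; rewrite /cparam /rot /trace_poly; field.
have -> : - (t + 1) + t = -1 :> F by ring.
by rewrite t0 t1 four_neq0 !oppr_eq0 t1 oner_eq0.
Qed.

End Rotation.
End PeriodThreeAlgebra.
Arguments cparam {F}.

Section PeriodThreeCount.
Variable F : finFieldType.
Hypothesis two_neq0 : (2 : F) != 0.

(* Fix: roots of u^2 + u + 1 (doubled fixed points of f that are roots of
   Phi3); Adm: admissible traces; Good: the c counted by N. *)
Definition Fix : {set F} := [set u | u^+2 + u + 1 == 0].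
Definition Adm : {set F} := [set t | admissible t].
Definition Good : {set F} := [set c | has_linear_factor (Phi3 c)].

Lemma linear_factor_root (q : {poly F}) :
  has_linear_factor q -> exists x, root q x.
Proof.
case/existsP=> a /existsP [b /andP [a0 dvd_q]]; exists (- b / a).
apply: (root_dvdp dvd_q); rewrite /root !hornerE /=.
by rewrite mulrAC divff // mul1r addNr.
Qed.

Lemma Good_sub : Good \subset cparam @: Adm :|: [set u / 2 - u^+2 / 4 | u in Fix].
Proof.
apply/subsetP => c; rewrite inE => /linear_factor_root [x /rootP root_x].
rewrite inE; have [fix_x|nfix_x] := eqVneq (x^+2 + c) x.
  have [fix_u ->] := fixed_root_param two_neq0 root_x fix_x.
  by apply/orP; right; apply/imsetP; exists (2 * x); rewrite ?inE ?fix_u.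
have [adm Ec] := cycle_root_param two_neq0 root_x nfix_x.
by apply/orP; left; apply/imsetP; exists (trace c x); rewrite ?inE ?Ec.
Qed.

(* Each fibre of cparam over Adm contains a full rot-orbit of size three. *)
Lemma card_cparam_image : (3 * #|cparam @: Adm| <= #|Adm|)%N.
Proof.
rewrite -[#|Adm|]sum1_card (partition_big_imset cparam) /= mulnC -sum_nat_const.
apply: leq_sum => _ /imsetP [t adm_t ->]; rewrite inE in adm_t.
have adm_rt := rot_admissible adm_t; have adm_rrt := rot_admissible adm_rt.
have orbit_uniq : uniq [:: t; rot t; rot (rot t)].
  by rewrite /= !inE !negb_or eq_sym rot_neq // eq_sym rot2_neq // eq_sym rot_neq.
rewrite sum1_card -[3%N]/(size [:: t; rot t; rot (rot t)]) -(card_uniqP orbit_uniq).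
apply: subset_leq_card.
apply/subsetP => y; rewrite !inE => /or3P [] /eqP ->;
  by rewrite unfold_in /= inE ?adm_t ?adm_rt ?adm_rrt ?cparam_rot ?eqxx.
Qed.

(* The non-admissible points are 0, -1 and the elements of Fix. *)
Lemma card_Adm : (#|Adm| + #|Fix| + 2 = #|F|)%N.
Proof.
pose E := [set t : F | t^+2 + t + 1 != 0].
have EF : Fix = ~: E by apply/setP => u; rewrite !inE negbK.
have card2 : #|[set (0 : F); -1]| = 2%N.
  by rewrite cards2 eq_sym oppr_eq0 oner_eq0.
have sub2 : [set (0 : F); -1] \subset E.
  apply/subsetP => u; rewrite !inE => /orP [] /eqP ->;
    by rewrite (_ : _ + _ = 1) ?oner_neq0 //; ring.
have AE : Adm = E :\: [set 0; -1].
  by apply/setP => u; rewrite !inE /admissible (addr_eq0 u 1) negb_or andbA andbC.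
rewrite -(cardsC E) -EF AE cardsD (setIidPr sub2) card2 addnAC subnK //.
by rewrite -card2 subset_leq_card.
Qed.

Lemma count_bound : (3 * #|Good| + 2 <= #|F| + 2 * #|Fix|)%N.
Proof.
have good_le : (#|Good| <= #|cparam @: Adm| + #|Fix|)%N.
  apply: leq_trans (subset_leq_card Good_sub) _.
  by rewrite cardsU (leq_trans (leq_subr _ _)) // leq_add2l leq_imset_card.
have := card_cparam_image; have := card_Adm; lia.
Qed.

(* u^2 + u + 1 = ((2u + 1)^2 + 3) / 4 has as many roots as y^2 = -3. *)
Lemma card_Fix : #|Fix| =
  if (3 : F) == 0 then 1%N else if [exists y : F, y ^+ 2 == - 3] then 2%N else 0%N.
Proof.
have h4 := four_neq0 two_neq0.
have [h3|h3] := eqVneq (3 : F) 0.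
  suff -> : Fix = [set 1] by rewrite cards1.
  apply/setP => u; rewrite !inE.
  have -> : u^+2 + u + 1 = (u - 1)^+2 + 3 * u by ring.
  by rewrite h3 mul0r addr0 expf_eq0 /= subr_eq0.
case: existsP => [[y /eqP y2]|no_sqrt].
  have y0 : y != 0 by apply: contra_eq_neq y2 => ->; rewrite expr0n eq_sym oppr_eq0.
  suff -> : Fix = [set (y - 1) / 2; (- y - 1) / 2].
    rewrite cards2; suff -> : (y - 1) / 2 != (- y - 1) / 2 by [].
    apply: contra_neq y0 => E.
    apply: (mulfI two_neq0); rewrite mulr0.
    have -> : 2 * y = ((y - 1) / 2 - (- y - 1) / 2) * 2 by field.
    by rewrite E subrr mul0r.
  apply/setP => u; rewrite !inE.
  have -> : u^+2 + u + 1 = (u - (y - 1) / 2) * (u - (- y - 1) / 2) + (y^+2 + 3) / 4.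
    by field; rewrite h4 two_neq0.
  by rewrite y2 addNr mul0r addr0 mulf_eq0 !subr_eq0.
suff -> : Fix = set0 by rewrite cards0.
apply/setP => u; rewrite !inE; apply/negbTE/negP => /eqP fix_u; apply: no_sqrt.
exists (2 * u + 1); apply/eqP.
have -> : (2 * u + 1)^+2 = 4 * (u^+2 + u + 1) - 3 by ring.
by rewrite fix_u mulr0 sub0r.
Qed.

End PeriodThreeCount.

Section PrimeField.
Variable p : nat.
Hypothesis p_prime : prime p.
Hypothesis p_odd : odd p.

Lemma Fp_two_neq0 : (2 : 'F_p) != 0.
Proof.
have p_gt2 : (2 < p)%N by have := prime_gt1 p_prime; move: p_odd; case: p => [|[|[|]]].
by apply/eqP => E; have := val_Fp_nat p_prime 2; rewrite E /= modn_small.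
Qed.

Lemma Fp_three_eq0 : ((3 : 'F_p) == 0) = (p %| 3)%N.
Proof.
have val3 := val_Fp_nat p_prime 3; apply/eqP/idP => [E|].
  by rewrite /dvdn -val3 E.
by move=> /eqP d3; apply: val_inj; rewrite [LHS]val3 d3.
Qed.

Lemma Fp_card_Fix : (#|Fix 'F_p|%:R : rat) = 1 + (legendre_m3 p)%:~R.
Proof.
rewrite (card_Fix Fp_two_neq0) Fp_three_eq0 /legendre_m3.
by case: ifP => _; [|case: ifP => _]; rewrite /= ?mulrN1z; lra.
Qed.

End PrimeField.

Theorem theorem15 (p : nat) (hp : prime p) (hodd : odd p) :
  (Ncount p)%:R <= ((p%:R + 2 * (legendre_m3 p)%:~R) / 3 : rat).
Proof.
have bound : 3 * (Ncount p)%:R + 2 <= p%:R + 2 * #|Fix 'F_p|%:R :> rat.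
  rewrite -[X in _ <= X%:R + _](card_Fp hp) -!natrM -!natrD ler_nat.
  exact: count_bound (Fp_two_neq0 hp hodd).
by rewrite ler_pdivlMr //; move: bound; rewrite (Fp_card_Fix hp hodd); lra.
Qed.
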